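(* For every closed $\mathcal L$-term $t$, neither the code of the sentence $\mathrm Pt$ nor the code of the sentence $\neg\mathrm Pt$ belongs to $P_\infty^+$, where $(T_\infty,P_\infty)$ is the least fixed point of $\Gamma_{\mathscr{TP}}$ (the stage at which the sequence $(T_\alpha,P_\alpha)$ stabilizes).
   Context: Language. Let $\mathcal L_{\mathbb N}$ be the language of first-order Peano arithmetic and $\mathcal L=\mathcal L_{\mathbb N}\cup\{\mathrm T,\mathrm P\}$ with unary predicates $\mathrm T,\mathrm P$. $\mathcal L$-formulas are in Tait style: literals are $s=t$, $s\neq t$, $\mathrm Tt$, $\neg\mathrm Tt$, $\mathrm Pt$, $\neg\mathrm Pt$; formulas are built from literals by $\wedge,\vee,\forall,\exists$; negation of an arbitrary formula is defined by De Morgan dualities with $\neg\neg\varphi:=\varphi$. A standard Gödel numbering is fixed; $\#e$ is the code of $e$, $\ulcorner e\urcorner$ the numeral of $\#e$, $\mathrm{val}(t)$ the value of a closed term $t$, $\dot\neg$ the primitive recursive function with $\dot\neg(\#\varphi)=\#\neg\varphi$; $\mathrm T\varphi,\mathrm P\varphi$ abbreviate $\mathrm T\ulcorner\varphi\urcorner,\mathrm P\ulcorner\varphi\urcorner$. Semantics. A partial model is $(\mathbb N,T,P)$ with $\mathbb N$ the standard model and $T=(T^+,T^-)$, $P=(P^+,P^-)$ pairs of subsets of $\omega$. Strong Kleene satisfaction $\models_{SK}$: arithmetic literals evaluated in $\mathbb N$; $\mathrm Tt$ satisfied iff $\mathrm{val}(t)\in T^+$, $\neg\mathrm Tt$ iff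 $\mathrm{val}(t)\in T^-$, likewise for $\mathrm P$ with $P^\pm$; conjunction iff both, disjunction iff at least one, $\forall x\varphi(x)$ iff all numeral instances, $\exists x\varphi(x)$ iff some numeral instance. Base paradoxicality. $\mathrm{PA}[\mathrm{SK}]$ is the two-sided sequent calculus for Strong Kleene logic with identity in $\mathcal L$ (initial sequents $\varphi\Rightarrow\varphi$, cut, weakening, the rule from $\Gamma\Rightarrow\Delta,\varphi$ infer $\neg\varphi,\Gamma\Rightarrow\Delta$, usual rules for $\wedge,\vee,\forall,\exists$, reflexivity $\Rightarrow t=t$, replacement from $\Gamma\Rightarrow\Delta,\varphi(t)$ infer $\Gamma\Rightarrow\Delta,s\neq t,\varphi(s)$) plus the initial sequents of Peano arithmetic and the induction rule for all $\mathcal L$-formulas. A sentence $\varphi$ is base paradoxical iff $\mathrm{PA}[\mathrm{SK}]$ derives $\varphi\Leftrightarrow\neg\mathrm T\varphi$ and $\neg\varphi\Leftrightarrow\mathrm T\varphi$ ($\Leftrightarrow$ meaning both sequents). $B(x)$ is an $\mathcal L_{\mathbb N}$-formula defining in $\mathbb N$ the set of codes of base paradoxical sentences, and $\Pi(x):=B(x)\vee B(\dot\neg x)$. Jump and sequence. Let $\mathscr P(x)$ be the $\mathcal L$-formula which is the disjunction of: (1) $x$ codes a sentence and $\Pi(x)$; (2) $x$ codes a sentence $\mathrm Tt$ ($t$ a closed term) and $\mathrm P(\mathrm{val}(t))$; (3) $x$ codes a sentence $\neg\mathrm Tt$ and $\mathrm P(\mathrm{val}(t))$; (4) $x$ codes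 a sentence $\psi\wedge\theta$ and $(\mathrm P\psi\wedge\mathrm P\theta)\vee(\mathrm T\psi\wedge\mathrm P\theta)\vee(\mathrm T\theta\wedge\mathrm P\psi)$; (5) $x$ codes a sentence $\psi\vee\theta$ and $(\mathrm P\psi\wedge\mathrm P\theta)\vee(\neg\mathrm T\psi\wedge\mathrm P\theta)\vee(\neg\mathrm T\theta\wedge\mathrm P\psi)$; (6) $x$ codes a sentence $\forall v\psi$ and $\exists y\,\mathrm P\psi(\dot y)\wedge\forall y(\mathrm P\psi(\dot y)\vee\mathrm T\psi(\dot y))$; (7) $x$ codes a sentence $\exists v\psi$ and $\exists y\,\mathrm P\psi(\dot y)\wedge\forall y(\mathrm P\psi(\dot y)\vee\neg\mathrm T\psi(\dot y))$; here $\psi(\dot y)$ is the code of the result of substituting the numeral of $y$ for $v$. Write $\mathscr P(\varphi)$ for $\mathscr P(\ulcorner\varphi\urcorner)$. Define $\Gamma_{\mathscr{TP}}(T,P)=\big((\{\#\varphi:(\mathbb N,T,P)\models_{SK}\varphi\},\{\#\varphi:(\mathbb N,T,P)\models_{SK}\neg\varphi\}),(\{\#\varphi:(\mathbb N,T,P)\models_{SK}\mathscr P(\varphi)\},\{\#\varphi:(\mathbb N,T,P)\models_{SK}\varphi\vee\neg\varphi\})\big)$, $\varphi$ ranging over $\mathcal L$-sentences. Define $(T_0,P_0)=((\emptyset,\emptyset),(\emptyset,\emptyset))$, $(T_{\beta+1},P_{\beta+1})=\Gamma_{\mathscr{TP}}(T_\beta,P_\beta)$, $(T_\lambda,P_\lambda)=\bigcup_{\beta<\lambda}(T_\beta,P_\beta)$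 (componentwise union) for limit $\lambda$. This sequence reaches a fixed point $(T_\infty,P_\infty)$, $P_\infty=(P_\infty^+,P_\infty^-)$. *)

From Stdlib Require Import List Arith.
Import ListNotations.

Inductive term : Type :=
| Var   : nat -> term
| Zero  : term
| Succ  : term -> term
| Plus  : term -> term -> term
| Times : term -> term -> term.

(* Tait-style L-formulas: literals, /\, \/, forall, exists *)
Inductive form : Type :=
| Eq   : term -> term -> form
| Neq  : term -> term -> form
| Tr   : term -> form
| NTr  : term -> form
| Pr   : term -> form
| NPr  : term -> form
| And  : form -> form -> form
| Or   : form -> form -> form
| All  : form -> form
| Ex   : form -> form.

Fixpoint neg (f : form) : form :=
  match f with
  | Eq s t => Neq s t
  | Neq s t => Eq s t
  | Tr t => NTr t
  | NTr t => Tr t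
  | Pr t => NPr t
  | NPr t => Pr t
  | And a b => Or (neg a) (neg b)
  | Or a b => And (neg a) (neg b)
  | All a => Ex (neg a)
  | Ex a => All (neg a)
  end.

Fixpoint tsubst (s : nat -> term) (t : term) : term :=
  match t with
  | Var k => s k
  | Zero => Zero
  | Succ u => Succ (tsubst s u)
  | Plus u v => Plus (tsubst s u) (tsubst s v)
  | Times u v => Times (tsubst s u) (tsubst s v)
  end.

Definition tlift (t : term) : term := tsubst (fun k => Var (S k)) t.

Definition up (s : nat -> term) : nat -> term :=
  fun k => match k with 0 => Var 0 | S k' => tlift (s k') end.

Fixpoint fsubst (s : nat -> term) (f : form) : form :=
  match f with
  | Eq a b => Eq (tsubst s a) (tsubst s b)
  | Neq a b => Neq (tsubst s a) (tsubst s b)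
  | Tr a => Tr (tsubst s a)
  | NTr a => NTr (tsubst s a)
  | Pr a => Pr (tsubst s a)
  | NPr a => NPr (tsubst s a)
  | And a b => And (fsubst s a) (fsubst s b)
  | Or a b => Or (fsubst s a) (fsubst s b)
  | All a => All (fsubst (up s) a)
  | Ex a => Ex (fsubst (up s) a)
  end.

Definition flift (f : form) : form := fsubst (fun k => Var (S k)) f.

Definition inst (f : form) (t : term) : form :=
  fsubst (fun k => match k with 0 => t | S k' => Var k' end) f.

Definition substS (f : form) : form :=
  fsubst (fun k => match k with 0 => Succ (Var 0) | S k' => Var (S k') end) f.

Fixpoint tclosedn (n : nat) (t : term) : Prop :=
  match t with
  | Var k => k < n
  | Zero => True
  | Succ u => tclosedn n u
  | Plus u v | Times u v => tclosedn n u /\ tclosedn n v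
  end.

Fixpoint fclosedn (n : nat) (f : form) : Prop :=
  match f with
  | Eq a b | Neq a b => tclosedn n a /\ tclosedn n b
  | Tr a | NTr a | Pr a | NPr a => tclosedn n a
  | And a b | Or a b => fclosedn n a /\ fclosedn n b
  | All a | Ex a => fclosedn (S n) a
  end.

Definition closed_term (t : term) : Prop := tclosedn 0 t.
Definition sentence (f : form) : Prop := fclosedn 0 f.

Fixpoint num (n : nat) : term :=
  match n with 0 => Zero | S m => Succ (num m) end.

Fixpoint eval (rho : nat -> nat) (t : term) : nat :=
  match t with
  | Var k => rho k
  | Zero => 0
  | Succ u => S (eval rho u)
  | Plus u v => eval rho u + eval rho v
  | Times u v => eval rho u * eval rho v
  end.

Definition val (t : term) : nat := eval (fun _ => 0) t.

Definition cp (a b : nat) : nat := (a + b) * (a + b + 1) / 2 + b.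

Fixpoint tcode (t : term) : nat :=
  match t with
  | Var k => cp 0 k
  | Zero => cp 1 0
  | Succ u => cp 2 (tcode u)
  | Plus u v => cp 3 (cp (tcode u) (tcode v))
  | Times u v => cp 4 (cp (tcode u) (tcode v))
  end.

Fixpoint code (f : form) : nat :=
  match f with
  | Eq a b => cp 0 (cp (tcode a) (tcode b))
  | Neq a b => cp 1 (cp (tcode a) (tcode b))
  | Tr a => cp 2 (tcode a)
  | NTr a => cp 3 (tcode a)
  | Pr a => cp 4 (tcode a)
  | NPr a => cp 5 (tcode a)
  | And a b => cp 6 (cp (code a) (code b))
  | Or a b => cp 7 (cp (code a) (code b))
  | All a => cp 8 (code a)
  | Ex a => cp 9 (code a)
  end.

Definition quote (f : form) : term := num (code f).

Record pmodel : Type := PM {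
  Tp : nat -> Prop;
  Tm : nat -> Prop;
  Pp : nat -> Prop;
  Pm : nat -> Prop
}.

(* Strong Kleene satisfaction for sentences (numeral instances for quantifiers) *)
Inductive SK (M : pmodel) : form -> Prop :=
| SK_eq  : forall s t, val s = val t -> SK M (Eq s t)
| SK_neq : forall s t, val s <> val t -> SK M (Neq s t)
| SK_tr  : forall t, Tp M (val t) -> SK M (Tr t)
| SK_ntr : forall t, Tm M (val t) -> SK M (NTr t)
| SK_pr  : forall t, Pp M (val t) -> SK M (Pr t)
| SK_npr : forall t, Pm M (val t) -> SK M (NPr t)
| SK_and : forall a b, SK M a -> SK M b -> SK M (And a b)
| SK_orl : forall a b, SK M a -> SK M (Or a b)
| SK_orr : forall a b, SK M b -> SK M (Or a b)
| SK_all : forall a, (forall n, SK M (inst a (num n))) -> SK M (All a)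
| SK_ex  : forall a n, SK M (inst a (num n)) -> SK M (Ex a).

(* Initial sequents of PA: universal closures of the basic axioms
   (variable 0 = innermost quantifier). *)
Inductive PAax : form -> Prop :=
| PA1 : PAax (All (Neq (Succ (Var 0)) Zero))
| PA2 : PAax (All (All (Or (Neq (Succ (Var 1)) (Succ (Var 0))) (Eq (Var 1) (Var 0)))))
| PA3 : PAax (All (Eq (Plus (Var 0) Zero) (Var 0)))
| PA4 : PAax (All (All (Eq (Plus (Var 1) (Succ (Var 0))) (Succ (Plus (Var 1) (Var 0))))))
| PA5 : PAax (All (Eq (Times (Var 0) Zero) Zero))
| PA6 : PAax (All (All (Eq (Times (Var 1) (Succ (Var 0))) (Plus (Times (Var 1) (Var 0)) (Var 1))))).

Inductive Deriv : list form -> list form -> Prop :=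
| D_init : forall f, Deriv [f] [f]
| D_weak : forall G D G' D', Deriv G D -> incl G G' -> incl D D' -> Deriv G' D'
| D_cut  : forall G D f, Deriv G (f :: D) -> Deriv (f :: G) D -> Deriv G D
| D_negL : forall G D f, Deriv G (f :: D) -> Deriv (neg f :: G) D
| D_andL : forall G D a b, Deriv (a :: b :: G) D -> Deriv (And a b :: G) D
| D_andR : forall G D a b, Deriv G (a :: D) -> Deriv G (b :: D) -> Deriv G (And a b :: D)
| D_orL  : forall G D a b, Deriv (a :: G) D -> Deriv (b :: G) D -> Deriv (Or a b :: G) D
| D_orR  : forall G D a b, Deriv G (a :: b :: D) -> Deriv G (Or a b :: D)
| D_allL : forall G D a t, Deriv (inst a t :: G) D -> Deriv (All a :: G) D
| D_allR : forall G D a, Deriv (map flift G) (a :: map flift D) -> Deriv G (All a :: D)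
| D_exL  : forall G D a, Deriv (a :: map flift G) (map flift D) -> Deriv (Ex a :: G) D
| D_exR  : forall G D a t, Deriv G (inst a t :: D) -> Deriv G (Ex a :: D)
| D_refl : forall t, Deriv [] [Eq t t]
| D_repl : forall G D a s t,
    Deriv G (inst a t :: D) -> Deriv G (Neq s t :: inst a s :: D)
| D_PA   : forall f, PAax f -> Deriv [] [f]
| D_PAem : forall s t, Deriv [] [Eq s t; Neq s t]
| D_ind  : forall G D a t,
    Deriv (a :: map flift G) (substS a :: map flift D) ->
    Deriv (inst a Zero :: G) (inst a t :: D).

Definition base_paradoxical (f : form) : Prop :=
  sentence f /\
  Deriv [f] [NTr (quote f)] /\ Deriv [NTr (quote f)] [f] /\
  Deriv [neg f] [Tr (quote f)] /\ Deriv [Tr (quote f)] [neg f].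

Definition Bset (n : nat) : Prop :=
  exists f, sentence f /\ n = code f /\ base_paradoxical f.

(* Strong Kleene value of script-P at the numeral of n, written out clause
   by clause (its arithmetical parts are two-valued). *)
Definition scriptP (M : pmodel) (n : nat) : Prop :=
  (exists f, sentence f /\ n = code f /\ (Bset (code f) \/ Bset (code (neg f))))
  \/ (exists t, closed_term t /\ n = code (Tr t) /\ Pp M (val t))
  \/ (exists t, closed_term t /\ n = code (NTr t) /\ Pp M (val t))
  \/ (exists a b, sentence (And a b) /\ n = code (And a b) /\
        ((Pp M (code a) /\ Pp M (code b)) \/ (Tp M (code a) /\ Pp M (code b))
         \/ (Tp M (code b) /\ Pp M (code a))))
  \/ (exists a b, sentence (Or a b) /\ n = code (Or a b) /\
        ((Pp M (code a) /\ Pp M (code b)) \/ (Tm M (code a) /\ Pp M (code b))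
         \/ (Tm M (code b) /\ Pp M (code a))))
  \/ (exists a, sentence (All a) /\ n = code (All a) /\
        (exists y, Pp M (code (inst a (num y)))) /\
        (forall y, Pp M (code (inst a (num y))) \/ Tp M (code (inst a (num y)))))
  \/ (exists a, sentence (Ex a) /\ n = code (Ex a) /\
        (exists y, Pp M (code (inst a (num y)))) /\
        (forall y, Pp M (code (inst a (num y))) \/ Tm M (code (inst a (num y))))).

Definition GammaTP (M : pmodel) : pmodel :=
  PM (fun n => exists f, sentence f /\ n = code f /\ SK M f)
     (fun n => exists f, sentence f /\ n = code f /\ SK M (neg f))
     (fun n => exists f, sentence f /\ n = code f /\ scriptP M n)
     (fun n => exists f, sentence f /\ n = code f /\ SK M (Or f (neg f))).

Definition pm_le (M N : pmodel) : Prop :=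
  (forall n, Tp M n -> Tp N n) /\ (forall n, Tm M n -> Tm N n) /\
  (forall n, Pp M n -> Pp N n) /\ (forall n, Pm M n -> Pm N n).

(* the least fixed point (T_infty, P_infty) of the monotone operator GammaTP:
   intersection of all pre-fixed points (Knaster-Tarski) *)
Definition lfpTP : pmodel :=
  PM (fun n => forall X, pm_le (GammaTP X) X -> Tp X n)
     (fun n => forall X, pm_le (GammaTP X) X -> Tm X n)
     (fun n => forall X, pm_le (GammaTP X) X -> Pp X n)
     (fun n => forall X, pm_le (GammaTP X) X -> Pm X n).

From Stdlib Require Import List Arith Lia Classical.

(* Clauses (2)-(7) of script-P only ever put codes of T-literals and of
   compound sentences into P^+, and clause (1) could add [P t] or [~P t] only
   if one of them were base paradoxical.  Neither is: PA[SK] is sound for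
   classical two-valued semantics, and reading T as the full set makes
   [~T "phi"] false, so a base paradoxical phi would be false in every such
   model, whereas [P t] holds when P is read as everything and [~P t] when P
   is read as nothing.  Hence the model whose only non-full component is a P^+
   omitting all P-literals is a pre-fixed point of Gamma_TP, and it contains
   the least fixed point. *)

Definition triangle (n : nat) : nat := n * (n + 1) / 2.

Lemma triangle_S n : triangle (S n) = triangle n + S n.
Proof.
  unfold triangle.
  replace (S n * (S n + 1)) with (n * (n + 1) + S n * 2) by nia.
  now rewrite Nat.div_add.
Qed.

Lemma triangle_le_mono m n : m <= n -> triangle m <= triangle n.
Proof. induction 1; [lia | rewrite triangle_S; lia]. Qed.

Lemma cp_inj a b c d : cp a b = cp c d -> a = c /\ b = d.
Proof.
  unfold cp; fold (triangle (a + b)) (triangle (c + d)); intro E.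
  assert (Hsum : a + b = c + d).
  { destruct (lt_eq_lt_dec (a + b) (c + d)) as [[lt | eq] | gt]; trivial.
    - pose proof (triangle_le_mono (S (a + b)) (c + d) lt); rewrite triangle_S in *; lia.
    - pose proof (triangle_le_mono (S (c + d)) (a + b) gt); rewrite triangle_S in *; lia. }
  rewrite Hsum in E; lia.
Qed.

Lemma tcode_inj s t : tcode s = tcode t -> s = t.
Proof.
  revert t; induction s; intros [] E; simpl in E;
    repeat (apply cp_inj in E as [? E]); try discriminate; f_equal; auto.
Qed.

Lemma code_inj f g : code f = code g -> f = g.
Proof.
  revert g; induction f; intros [] E; simpl in E;
    repeat (apply cp_inj in E as [? E]); try discriminate;
    f_equal; auto using tcode_inj.
Qed.

Definition scons (n : nat) (rho : nat -> nat) : nat -> nat :=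
  fun k => match k with 0 => n | S k' => rho k' end.

Lemma eval_ext rho rho' t : (forall k, rho k = rho' k) -> eval rho t = eval rho' t.
Proof. intro E; induction t; simpl; auto. Qed.

Lemma eval_tsubst rho s t : eval rho (tsubst s t) = eval (fun k => eval rho (s k)) t.
Proof. induction t; simpl; auto. Qed.

Section ClassicalSemantics.

Variables Tset Pset : nat -> Prop.

Fixpoint sat (rho : nat -> nat) (f : form) : Prop :=
  match f with
  | Eq a b => eval rho a = eval rho b
  | Neq a b => eval rho a <> eval rho b
  | Tr a => Tset (eval rho a)
  | NTr a => ~ Tset (eval rho a)
  | Pr a => Pset (eval rho a)
  | NPr a => ~ Pset (eval rho a)
  | And a b => sat rho a /\ sat rho b
  | Or a b => sat rho a \/ sat rho b
  | All a => forall n, sat (scons n rho) a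
  | Ex a => exists n, sat (scons n rho) a
  end.

Lemma sat_ext f : forall rho rho', (forall k, rho k = rho' k) -> (sat rho f <-> sat rho' f).
Proof.
  assert (Hscons : forall n rho rho', (forall k, rho k = rho' k) ->
            forall k, scons n rho k = scons n rho' k) by (intros ? ? ? ? []; simpl; auto).
  induction f; intros rho rho' E; simpl; rewrite ?(eval_ext rho rho' _ E); try tauto.
  - rewrite (IHf1 _ _ E), (IHf2 _ _ E); tauto.
  - rewrite (IHf1 _ _ E), (IHf2 _ _ E); tauto.
  - now setoid_rewrite (fun n => IHf _ _ (Hscons n rho rho' E)).
  - now setoid_rewrite (fun n => IHf _ _ (Hscons n rho rho' E)).
Qed.

Lemma sat_fsubst f : forall rho s, sat rho (fsubst s f) <-> sat (fun k => eval rho (s k)) f.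
Proof.
  assert (Hup : forall n rho s k,
            eval (scons n rho) (up s k) = scons n (fun k => eval rho (s k)) k).
  { intros n rho s [|k]; simpl; trivial.
    unfold tlift; rewrite eval_tsubst; apply eval_ext; trivial. }
  induction f; intros rho s; simpl; rewrite ?eval_tsubst; try tauto.
  - rewrite IHf1, IHf2; tauto.
  - rewrite IHf1, IHf2; tauto.
  - setoid_rewrite IHf; now setoid_rewrite (fun n => sat_ext f _ _ (Hup n rho s)).
  - setoid_rewrite IHf; now setoid_rewrite (fun n => sat_ext f _ _ (Hup n rho s)).
Qed.

Lemma sat_inst rho a t : sat rho (inst a t) <-> sat (scons (eval rho t) rho) a.
Proof. unfold inst; rewrite sat_fsubst; apply sat_ext; now intros []. Qed.

Lemma sat_flift n rho f : sat (scons n rho) (flift f) <-> sat rho f.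
Proof. unfold flift; now rewrite sat_fsubst. Qed.

Lemma sat_substS rho a : sat rho (substS a) <-> sat (scons (S (rho 0)) (fun k => rho (S k))) a.
Proof. unfold substS; rewrite sat_fsubst; apply sat_ext; now intros []. Qed.

Lemma sat_neg f : forall rho, sat rho (neg f) <-> ~ sat rho f.
Proof.
  induction f; intro rho; simpl; rewrite ?IHf1, ?IHf2; try tauto.
  - setoid_rewrite IHf; split; [firstorder | apply not_all_ex_not].
  - setoid_rewrite IHf; firstorder.
Qed.

Definition valid (G D : list form) : Prop :=
  forall rho, Forall (sat rho) G -> Exists (sat rho) D.

Lemma Forall_sat_map_flift n rho G :
  Forall (sat (scons n rho)) (map flift G) <-> Forall (sat rho) G.
Proof. rewrite Forall_map; split; apply Forall_impl; intro; apply sat_flift. Qed.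

Lemma Exists_sat_map_flift n rho D :
  Exists (sat (scons n rho)) (map flift D) <-> Exists (sat rho) D.
Proof. rewrite Exists_map; split; apply Exists_impl; intro; apply sat_flift. Qed.

Lemma PAax_sat rho f : PAax f -> sat rho f.
Proof. destruct 1; simpl; intros; lia. Qed.

Lemma valid_allR G D a :
  valid (map flift G) (a :: map flift D) -> valid G (All a :: D).
Proof.
  intros V rho HG; apply Exists_cons.
  destruct (classic (Exists (sat rho) D)) as [HD | HD]; [now right | left]; intro n.
  specialize (V (scons n rho)); rewrite Forall_sat_map_flift, Exists_cons,
    Exists_sat_map_flift in V; tauto.
Qed.

Lemma valid_exL G D a :
  valid (a :: map flift G) (map flift D) -> valid (Ex a :: G) D.
Proof.
  intros V rho [[n Ha] HG]%Forall_cons_iff.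
  apply (Exists_sat_map_flift n), V, Forall_cons; [exact Ha |].
  now apply Forall_sat_map_flift.
Qed.

Lemma valid_ind G D a t :
  valid (a :: map flift G) (substS a :: map flift D) ->
  valid (inst a Zero :: G) (inst a t :: D).
Proof.
  intros V rho [H0 HG]%Forall_cons_iff; apply Exists_cons.
  destruct (classic (Exists (sat rho) D)) as [HD | HD]; [now right | left].
  apply sat_inst; apply sat_inst in H0; generalize (eval rho t).
  induction n as [| n IH]; [exact H0 |].
  specialize (V (scons n rho)); rewrite Forall_cons_iff, Forall_sat_map_flift,
    Exists_cons, Exists_sat_map_flift, sat_substS in V; tauto.
Qed.

Lemma valid_repl G D a s t :
  valid G (inst a t :: D) -> valid G (Neq s t :: inst a s :: D).
Proof.
  intros V rho HG; specialize (V rho HG); rewrite !Exists_cons, !sat_inst in *; simpl.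
  destruct (Nat.eq_dec (eval rho s) (eval rho t)) as [-> | ]; tauto.
Qed.

Theorem soundness G D : Deriv G D -> valid G D.
Proof.
  induction 1; try apply valid_allR; try apply valid_exL; try apply valid_ind;
    try apply valid_repl; trivial; intros rho HG;
    repeat match goal with
           | V : valid _ _ |- _ => specialize (V rho)
           end;
    rewrite ?Forall_cons_iff, ?Exists_cons, ?sat_inst, ?sat_neg in *; simpl in *.
  all: try tauto.
  - eauto using incl_Forall, incl_Exists.
  - firstorder.
  - firstorder.
  - left; now apply PAax_sat.
Qed.

End ClassicalSemantics.

Lemma sat_not_base_paradoxical Pset rho f :
  sat (fun _ => True) Pset rho f -> ~ base_paradoxical f.
Proof.
  intros Hf [_ [V _]].
  specialize (soundness _ _ _ _ V rho (Forall_cons _ Hf (Forall_nil _))).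
  rewrite Exists_cons, Exists_nil; simpl; tauto.
Qed.

Lemma Pr_not_base_paradoxical u : ~ base_paradoxical (Pr u).
Proof. apply (sat_not_base_paradoxical (fun _ => True) (fun _ => 0)); exact I. Qed.

Lemma NPr_not_base_paradoxical u : ~ base_paradoxical (NPr u).
Proof. apply (sat_not_base_paradoxical (fun _ => False) (fun _ => 0)); simpl; tauto. Qed.

Lemma Bset_code f : Bset (code f) -> base_paradoxical f.
Proof. intros (g & _ & E & Hg); now rewrite (code_inj _ _ E). Qed.

Lemma scriptP_code_P_literal M f :
  (exists u, f = Pr u \/ f = NPr u) -> ~ scriptP M (code f).
Proof.
  intros (u & Hf) HP.
  assert (Hbp : ~ Bset (code f) /\ ~ Bset (code (neg f))).
  { destruct Hf as [-> | ->]; split; intros HB%Bset_code; revert HB.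
    all: apply Pr_not_base_paradoxical || apply NPr_not_base_paradoxical. }
  destruct HP as [(g & _ & E & HB) | [(? & _ & E & _) | [(? & _ & E & _) |
    [(? & ? & _ & E & _) | [(? & ? & _ & E & _) | [(? & _ & E & _) | (? & _ & E & _)]]]]]];
    apply code_inj in E; subst; [tauto | destruct Hf; discriminate ..].
Qed.

Definition P_literal_free : pmodel :=
  PM (fun _ => True) (fun _ => True)
     (fun n => forall u, n <> code (Pr u) /\ n <> code (NPr u)) (fun _ => True).

Lemma P_literal_free_prefixed : pm_le (GammaTP P_literal_free) P_literal_free.
Proof.
  split; [| split; [| split]]; [exact (fun _ _ => I) .. | | exact (fun _ _ => I)].
  intros n (f & _ & -> & HP) u; split; intros ->%code_inj;
    revert HP; apply scriptP_code_P_literal; eauto.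
Qed.

Theorem mainTheorem9 :
  forall t : term, closed_term t ->
    ~ Pp lfpTP (code (Pr t)) /\ ~ Pp lfpTP (code (NPr t)).
Proof.
  intros t _; split; intro H; destruct (H _ P_literal_free_prefixed t); auto.
Qed.
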